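(* Let $u\in C^2[0,\pi]$ with $u(x)>0$ for all $x\in[0,\pi]$, let $p,q\in\mathbb{N}^+$ with $\gcd(p,q)=1$, and let $\mu_{mn}=\lambda_n^2-\left(\frac{q}{p}m\right)^2$ for $m\in\mathbb{N}=\{0,1,2,\dots\}$, $n\in\mathbb{N}^+$, where $\lambda_1^2<\lambda_2^2<\cdots$ are the eigenvalues of the Dirichlet Sturm–Liouville problem $(u(x)\varphi'(x))'=-\lambda^2u(x)\varphi(x)$, $\varphi(0)=\varphi(\pi)=0$. Assume $p$ is even. Then, for odd $m$, the eigenvalues $\mu_{mn}$ are isolated and have finite multiplicity; that is, every element of the set $\{\mu_{mn}: m \text{ odd},\ n\in\mathbb{N}^+\}$ is an isolated point of this set and is equal to $\mu_{mn}$ for only finitely many pairs $(m,n)$ with $m$ odd, $n\in\mathbb{N}^+$.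
   Context: The $\mu_{mn}$ are the eigenvalues of the linear wave operator $L$ associated with $u(x)y_{tt}-(u(x)y_x)_x$ on $T$-periodic (with $T=2\pi p/q$) functions satisfying Dirichlet conditions at $x=0,\pi$, with eigenfunctions $\varphi_n(x)\cos\frac{q}{p}mt$, $\varphi_n(x)\sin\frac{q}{p}mt$, where $\varphi_n$ is the eigenfunction corresponding to $\lambda_n^2$. *)

From Stdlib Require Import Reals Lra Lia.
From Coquelicot Require Import Coquelicot.
Open Scope R_scope.


Definition C2_closed (f : R -> R) : Prop :=
  exists df ddf : R -> R,
    (forall x, 0 < x < PI -> is_derive f x (df x) /\ is_derive df x (ddf x)) /\
    (forall x, 0 <= x <= PI ->
       filterlim f (within (fun y => 0 <= y <= PI) (locally x)) (locally (f x)) /\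
       filterlim df (within (fun y => 0 <= y <= PI) (locally x)) (locally (df x)) /\
       filterlim ddf (within (fun y => 0 <= y <= PI) (locally x)) (locally (ddf x))).

(* Lam (= lambda^2) is an eigenvalue of the Dirichlet Sturm-Liouville problem
   (u phi')' = - Lam u phi on [0,pi], phi(0) = phi(pi) = 0, phi nontrivial. *)
Definition DSL_eigenvalue (u : R -> R) (Lam : R) : Prop :=
  exists phi dphi ddphi : R -> R,
    (forall x, 0 < x < PI -> is_derive phi x (dphi x) /\ is_derive dphi x (ddphi x)) /\
    (forall x, 0 <= x <= PI ->
       filterlim phi (within (fun y => 0 <= y <= PI) (locally x)) (locally (phi x)) /\
       filterlim dphi (within (fun y => 0 <= y <= PI) (locally x)) (locally (dphi x)) /\
       filterlim ddphi (within (fun y => 0 <= y <= PI) (locally x)) (locally (ddphi x))) /\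
    (forall x, 0 < x < PI ->
       is_derive (fun y => u y * dphi y) x (- Lam * u x * phi x)) /\
    phi 0 = 0 /\ phi PI = 0 /\
    (exists x, 0 <= x <= PI /\ phi x <> 0).

Definition DSL_eigen_enum (u : R -> R) (lam2 : nat -> R) : Prop :=
  (forall n, (1 <= n)%nat -> lam2 n < lam2 (S n)) /\
  (forall n, (1 <= n)%nat -> DSL_eigenvalue u (lam2 n)) /\
  (forall Lam, DSL_eigenvalue u Lam -> exists n, (1 <= n)%nat /\ lam2 n = Lam).

Definition mu (lam2 : nat -> R) (p q m n : nat) : R :=
  lam2 n - (INR q / INR p * INR m) ^ 2.

From Stdlib Require Import Reals Lra Lia ZArith List.
From Coquelicot Require Import Coquelicot.
Open Scope R_scope.

(* The Liouville substitution [a = sqrt u * phi'], [c = sqrt u * phi] turns the eigenvalue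
   equation into the first order system [a' = - g a - Lam c], [c' = g c + a] with
   [g = u' / (2 u)], and everything below is read off this system.

   A Wronskian argument, together with a Gronwall bound on how solutions depend on [Lam],
   shows that eigenvalues in a bounded window are uniformly separated; hence [lam2 n] tends
   to infinity. For [Lam = lam ^ 2 > 0], a first order correction of the Pruefer phase gives
   [|sin (lam PI)| lam <= K], so large [lam_n] lie within [O(1 / lam_n)] of the integers.

   For odd [m], [q m] is odd and [p] even, so [q m / p] is at distance at least [1 / p] from
   the integers. If [mu_mn = lam_n ^ 2 - (q m / p) ^ 2] stays in a bounded window, either
   [lam_n] is within [1 / (2 p)] of [q m / p], hence far from the integers and small by the
   sine bound, or it is not, and then [|mu_mn| >= lam_n / (2 p)] bounds [lam_n]. So only
   finitely many pairs [(m, n)] give values of [mu] near a given one, which yields both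
   isolation and finite multiplicity. *)

(** * Calculus on [[0, PI]] *)

Definition cont_Icc (f : R -> R) : Prop :=
  forall x, 0 <= x <= PI ->
    filterlim f (within (fun y => 0 <= y <= PI) (locally x)) (locally (f x)).

Definition deriv_Ioo (f df : R -> R) : Prop :=
  forall x, 0 < x < PI -> is_derive f x (df x).

Lemma cont_Icc_const (k : R) : cont_Icc (fun _ => k).
Proof. intros x _; apply filterlim_const. Qed.

Lemma cont_Icc_id : cont_Icc (fun x => x).
Proof. intros x _ P [eps He]; exists eps; intros y Hy _; exact (He y Hy). Qed.

Lemma cont_Icc_plus (f g : R -> R) :
  cont_Icc f -> cont_Icc g -> cont_Icc (fun x => f x + g x).
Proof.
  intros Hf Hg x Hx; eapply filterlim_comp_2; [apply Hf, Hx | apply Hg, Hx |].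
  apply (filterlim_plus (K := R_AbsRing) (V := R_NormedModule)).
Qed.

Lemma cont_Icc_mult (f g : R -> R) :
  cont_Icc f -> cont_Icc g -> cont_Icc (fun x => f x * g x).
Proof.
  intros Hf Hg x Hx; eapply filterlim_comp_2; [apply Hf, Hx | apply Hg, Hx |].
  apply (filterlim_mult (K := R_AbsRing)).
Qed.

Lemma cont_Icc_pow (f : R -> R) (n : nat) : cont_Icc f -> cont_Icc (fun x => f x ^ n).
Proof.
  intros Hf; induction n as [| n IH]; [apply (cont_Icc_const 1) | apply (cont_Icc_mult f _ Hf IH)].
Qed.

Lemma cont_Icc_comp (h f : R -> R) :
  cont_Icc f -> (forall x, 0 <= x <= PI -> continuous h (f x)) ->
  cont_Icc (fun x => h (f x)).
Proof. intros Hf Hh x Hx; eapply filterlim_comp; [apply Hf, Hx | apply Hh, Hx]. Qed.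

Lemma cont_Icc_opp (f : R -> R) : cont_Icc f -> cont_Icc (fun x => - f x).
Proof.
  intros Hf; apply (cont_Icc_comp Ropp f Hf); intros x _.
  apply (continuous_opp (fun y : R => y)), continuous_id.
Qed.

Lemma cont_Icc_minus (f g : R -> R) :
  cont_Icc f -> cont_Icc g -> cont_Icc (fun x => f x - g x).
Proof. intros Hf Hg; apply cont_Icc_plus; [exact Hf | apply cont_Icc_opp, Hg]. Qed.

Lemma cont_Icc_scal (k : R) (f : R -> R) : cont_Icc f -> cont_Icc (fun x => k * f x).
Proof. apply cont_Icc_mult, cont_Icc_const. Qed.

Lemma cont_Icc_inv (f : R -> R) :
  cont_Icc f -> (forall x, 0 <= x <= PI -> f x <> 0) -> cont_Icc (fun x => / f x).
Proof.
  intros Hf Hn; apply (cont_Icc_comp Rinv f Hf); intros x Hx.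
  apply (continuous_Rinv_comp (fun y => y)); [apply continuous_id | auto].
Qed.

Lemma cont_Icc_comp_lin (h : R -> R) (k : R) :
  (forall y, continuous h y) -> cont_Icc (fun x => h (k * x)).
Proof.
  intros Hh; apply (cont_Icc_comp h (fun x => k * x)); [apply cont_Icc_scal, cont_Icc_id | auto].
Qed.

(* Clamping to [0, PI] turns one-sided continuity on [0, PI] into continuity on R,
   which is what the Stdlib mean value and extreme value theorems require. *)
Definition clamp (x : R) : R := Rmax 0 (Rmin x PI).

Lemma clamp_in (x : R) : 0 <= clamp x <= PI.
Proof. unfold clamp, Rmax, Rmin; pose proof PI_RGT_0; repeat destruct Rle_dec; lra. Qed.

Lemma clamp_id (x : R) : 0 <= x <= PI -> clamp x = x.
Proof. unfold clamp, Rmax, Rmin; intros; repeat destruct Rle_dec; lra. Qed.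

Lemma clamp_lipschitz (x y : R) : Rabs (clamp y - clamp x) <= Rabs (y - x).
Proof.
  unfold clamp, Rmax, Rmin; pose proof PI_RGT_0.
  repeat destruct Rle_dec; unfold Rabs; repeat destruct Rcase_abs; lra.
Qed.

Lemma continuity_pt_clamp (f : R -> R) :
  cont_Icc f -> forall x, continuity_pt (fun y => f (clamp y)) x.
Proof.
  intros Hf x; apply continuity_pt_filterlim.
  eapply filterlim_comp; [| apply Hf, clamp_in].
  intros P [eps Heps]; exists eps; intros y Hy; apply Heps; [| apply clamp_in].
  eapply Rle_lt_trans; [apply clamp_lipschitz | exact Hy].
Qed.

Lemma locally_Ioo (x : R) : 0 < x < PI -> locally x (fun t => 0 < t < PI).
Proof.
  intros Hx; assert (He : 0 < Rmin x (PI - x)) by (apply Rmin_pos; lra).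
  exists (mkposreal _ He); intros y Hy; change (Rabs (y - x) < Rmin x (PI - x)) in Hy.
  pose proof (Rmin_l x (PI - x)); pose proof (Rmin_r x (PI - x)).
  apply Rabs_def2 in Hy; lra.
Qed.

Lemma cont_Icc_bounded (f : R -> R) :
  cont_Icc f -> exists M, forall x, 0 <= x <= PI -> Rabs (f x) <= M.
Proof.
  intros Hf; destruct (continuity_ab_maj (fun y => Rabs (f (clamp y))) 0 PI) as [m [Hm _]].
  - pose proof PI_RGT_0; lra.
  - intros c _; apply (continuity_pt_comp (fun y => f (clamp y)) Rabs).
    + apply continuity_pt_clamp, Hf.
    + apply Rcontinuity_abs.
  - exists (Rabs (f (clamp m))); intros x Hx; specialize (Hm x Hx); cbv beta in Hm.
    now rewrite clamp_id in Hm.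
Qed.

Lemma cont_Icc_mvt (f df : R -> R) (a b : R) :
  0 <= a < b -> b <= PI -> deriv_Ioo f df -> cont_Icc f ->
  exists c, a < c < b /\ f b - f a = df c * (b - a).
Proof.
  intros Hab Hb Hd Hc; set (fc := fun y => f (clamp y)).
  assert (Hdc : forall c, a < c < b -> is_derive fc c (df c)).
  { intros c Hc'; apply is_derive_ext_loc with f; [| apply Hd; lra].
    apply (filter_imp (fun t => 0 < t < PI)); [| apply locally_Ioo; lra].
    intros t Ht; unfold fc; rewrite clamp_id; lra. }
  assert (pr1 : forall c, a < c < b -> derivable_pt fc c)
    by (intros c Hc'; exists (df c); apply is_derive_Reals, Hdc, Hc').
  assert (pr2 : forall c, a < c < b -> derivable_pt id c) by (intros; apply derivable_pt_id).
  destruct (MVT fc id a b pr1 pr2 (proj2 Hab)) as [c [Hc' Heq]].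
  - intros; apply continuity_pt_clamp, Hc.
  - intros; apply derivable_continuous_pt, derivable_pt_id.
  - exists c; split; [exact Hc' |].
    rewrite (derive_pt_eq_0 fc c (df c) (pr1 c Hc')) in Heq by apply is_derive_Reals, Hdc, Hc'.
    rewrite (derive_pt_eq_0 id c 1 (pr2 c Hc')) in Heq by apply derivable_pt_lim_id.
    unfold fc, id in Heq; rewrite !clamp_id in Heq by lra; lra.
Qed.

Lemma increment_ge (f df : R -> R) (m a b : R) :
  deriv_Ioo f df -> cont_Icc f -> 0 <= a <= b -> b <= PI ->
  (forall t, a < t < b -> m <= df t) -> m * (b - a) <= f b - f a.
Proof.
  intros Hd Hc Hab Hb Hm; destruct (Req_dec a b) as [<- | Hne]; [lra |].
  destruct (cont_Icc_mvt f df a b) as [c [Hc' ->]]; try lra; auto.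
  apply Rmult_le_compat_r; [lra | apply Hm, Hc'].
Qed.

Lemma increment_abs_le (f df : R -> R) (M a b : R) :
  deriv_Ioo f df -> cont_Icc f -> 0 <= a <= b -> b <= PI ->
  (forall t, a < t < b -> Rabs (df t) <= M) -> Rabs (f b - f a) <= M * (b - a).
Proof.
  intros Hd Hc Hab Hb HM; destruct (Req_dec a b) as [<- | Hne].
  - rewrite !Rminus_diag, Rabs_R0; lra.
  - destruct (cont_Icc_mvt f df a b) as [c [Hc' ->]]; try lra; auto.
    rewrite Rabs_mult, (Rabs_pos_eq (b - a)) by lra.
    apply Rmult_le_compat_r; [lra | apply HM, Hc'].
Qed.

Lemma bump_le_of_equal_ends (f df : R -> R) (A m a b : R) :
  deriv_Ioo f df -> cont_Icc f -> 0 <= a <= b -> b <= PI -> f 0 = f PI ->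
  (forall t, 0 < t < PI -> - A <= df t) -> (forall t, a < t < b -> m - A <= df t) ->
  m * (b - a) <= A * PI.
Proof.
  intros Hd Hc Hab Hb Hends Hlow Hbump.
  pose proof (increment_ge f df (- A) 0 a Hd Hc ltac:(lra) ltac:(lra)
    ltac:(intros; apply Hlow; lra)).
  pose proof (increment_ge f df (m - A) a b Hd Hc Hab Hb Hbump).
  pose proof (increment_ge f df (- A) b PI Hd Hc ltac:(lra) ltac:(lra)
    ltac:(intros; apply Hlow; lra)).
  lra.
Qed.

Lemma is_derive_eq_val (f : R -> R) (x l l' : R) : is_derive f x l -> l = l' -> is_derive f x l'.
Proof. now intros H <-. Qed.

Lemma derive_plus (f g : R -> R) (x df dg : R) :
  is_derive f x df -> is_derive g x dg -> is_derive (fun t => f t + g t) x (df + dg).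
Proof. apply (is_derive_plus f g). Qed.

Lemma derive_minus (f g : R -> R) (x df dg : R) :
  is_derive f x df -> is_derive g x dg -> is_derive (fun t => f t - g t) x (df - dg).
Proof. apply (is_derive_minus f g). Qed.

Lemma derive_opp (f : R -> R) (x df : R) : is_derive f x df -> is_derive (fun t => - f t) x (- df).
Proof. apply (is_derive_opp f). Qed.

Lemma derive_mult (f g : R -> R) (x df dg : R) :
  is_derive f x df -> is_derive g x dg -> is_derive (fun t => f t * g t) x (df * g x + f x * dg).
Proof. intros; apply (is_derive_mult f g); auto; intros; apply Rmult_comm. Qed.

Lemma derive_sq (f : R -> R) (x df : R) :
  is_derive f x df -> is_derive (fun t => f t ^ 2) x (2 * f x * df).
Proof. intros; eapply is_derive_eq_val; [apply (is_derive_pow f 2); eauto | simpl; ring]. Qed.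

Lemma derive_const (k x : R) : is_derive (fun _ => k) x 0.
Proof. apply (is_derive_const k). Qed.

Lemma derive_id (x : R) : is_derive (fun t => t) x 1.
Proof. apply (is_derive_id x). Qed.

Lemma derive_cos_lin (k x : R) : is_derive (fun t => cos (k * t)) x (- k * sin (k * x)).
Proof. auto_derive; auto; ring. Qed.

Lemma derive_sin_lin (k x : R) : is_derive (fun t => sin (k * t)) x (k * cos (k * x)).
Proof. auto_derive; auto; ring. Qed.

Lemma derive_exp_lin (k x : R) : is_derive (fun t => exp (k * t)) x (k * exp (k * x)).
Proof. auto_derive; auto; ring. Qed.

Ltac derive_struct := repeat lazymatch goal with
  | |- is_derive (fun t => _ + _) _ _ => apply derive_plus
  | |- is_derive (fun t => _ - _) _ _ => apply derive_minus
  | |- is_derive (fun t => - _) _ _ => apply derive_opp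
  | |- is_derive (fun t => cos (_ * t)) _ _ => apply derive_cos_lin
  | |- is_derive (fun t => sin (_ * t)) _ _ => apply derive_sin_lin
  | |- is_derive (fun t => exp (_ * t)) _ _ => apply derive_exp_lin
  | |- is_derive (fun t => t) _ _ => apply derive_id
  | |- is_derive (fun t => _ * _) _ _ => apply derive_mult
  | |- is_derive (fun t => _ ^ 2) _ _ => apply derive_sq
  | |- is_derive (fun t => ?k) _ _ => apply derive_const
  | |- is_derive (Rmult ?k) _ _ => apply (derive_mult (fun _ => k) (fun t => t))
  end.

Ltac cont_struct := repeat lazymatch goal with
  | |- cont_Icc (fun t => _ + _) => apply cont_Icc_plus
  | |- cont_Icc (fun t => _ - _) => apply cont_Icc_minus
  | |- cont_Icc (fun t => - _) => apply cont_Icc_opp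
  | |- cont_Icc (fun t => cos (_ * t)) => apply cont_Icc_comp_lin, continuous_cos
  | |- cont_Icc (fun t => sin (_ * t)) => apply cont_Icc_comp_lin, continuous_sin
  | |- cont_Icc (fun t => exp (_ * t)) => apply cont_Icc_comp_lin, continuous_exp
  | |- cont_Icc (fun t => t) => apply cont_Icc_id
  | |- cont_Icc (fun t => _ * _) => apply cont_Icc_mult
  | |- cont_Icc (fun t => _ ^ _) => apply cont_Icc_pow
  | |- cont_Icc (fun t => ?k) => apply cont_Icc_const
  | |- cont_Icc (Rmult ?k) => apply (cont_Icc_mult (fun _ => k) (fun t => t))
  end.

Ltac derive_by H :=
  lazymatch type of H with deriv_Ioo ?f _ =>
    lazymatch goal with |- is_derive f _ _ => apply H; assumption end end.

Lemma exp_monotone (x y : R) : x <= y -> exp x <= exp y.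
Proof. intros [H | ->]; [left; apply exp_increasing, H | lra]. Qed.

Lemma exp_ge1 (x : R) : 0 <= x -> 1 <= exp x.
Proof. intros Hx; rewrite <- exp_0; apply exp_monotone, Hx. Qed.

Lemma exp_opp_mul (k x : R) : exp (- k * x) * exp (k * x) = 1.
Proof. rewrite <- exp_plus, <- exp_0; f_equal; ring. Qed.

Lemma exp_sq (x : R) : exp x ^ 2 = exp (2 * x).
Proof. rewrite <- Rsqr_pow2; unfold Rsqr; rewrite <- exp_plus; f_equal; ring. Qed.

Lemma abs_le_of_sq_le (x y : R) : 0 <= y -> x ^ 2 <= y ^ 2 -> Rabs x <= y.
Proof. intros Hy Hxy; unfold Rabs; destruct Rcase_abs; nra. Qed.

Lemma Rabs_mult_le (x y X Y : R) : Rabs x <= X -> Rabs y <= Y -> Rabs (x * y) <= X * Y.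
Proof. intros; rewrite Rabs_mult; apply Rmult_le_compat; auto using Rabs_pos. Qed.

Lemma gronwall_le (E dE : R -> R) (k L : R) :
  0 <= k -> 0 <= L -> deriv_Ioo E dE -> cont_Icc E ->
  (forall t, 0 < t < PI -> dE t <= k * E t + L) ->
  forall x, 0 <= x <= PI -> E x <= (E 0 + L * x) * exp (k * x).
Proof.
  intros Hk HL Hd Hc Hb x Hx.
  assert (Hinc : 0 * (x - 0) <= (L * x - E x * exp (- k * x)) - (L * 0 - E 0 * exp (- k * 0))).
  { apply (increment_ge (fun t => L * t - E t * exp (- k * t))
      (fun t => L - (dE t - k * E t) * exp (- k * t))); try lra.
    - intros t Ht; eapply is_derive_eq_val; [derive_struct; derive_by Hd | cbv beta; ring].
    - cont_struct; exact Hc.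
    - intros t Ht; specialize (Hb t ltac:(lra)).
      assert (Hexp : exp (- k * t) <= 1) by (rewrite <- exp_0; apply exp_monotone; nra).
      pose proof (exp_pos (- k * t)); nra. }
  rewrite !Rmult_0_r, exp_0 in Hinc.
  assert (Hmul : E x * exp (- k * x) * exp (k * x) <= (E 0 + L * x) * exp (k * x))
    by (apply Rmult_le_compat_r; [left; apply exp_pos | lra]).
  now rewrite Rmult_assoc, exp_opp_mul, Rmult_1_r in Hmul.
Qed.

Lemma gronwall_ge (E dE : R -> R) (k : R) :
  deriv_Ioo E dE -> cont_Icc E ->
  (forall t, 0 < t < PI -> - k * E t <= dE t) ->
  forall x, 0 <= x <= PI -> E 0 <= E x * exp (k * x).
Proof.
  intros Hd Hc Hb x Hx.
  assert (Hinc : 0 * (x - 0) <= E x * exp (k * x) - E 0 * exp (k * 0)).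
  { apply (increment_ge (fun t => E t * exp (k * t)) (fun t => (dE t + k * E t) * exp (k * t)));
      try lra.
    - intros t Ht; eapply is_derive_eq_val; [derive_struct; derive_by Hd | cbv beta; ring].
    - cont_struct; exact Hc.
    - intros t Ht; specialize (Hb t ltac:(lra)); pose proof (exp_pos (k * t)); nra. }
  rewrite Rmult_0_r, exp_0 in Hinc; lra.
Qed.

(** * The Liouville system *)

Lemma quadratic_form_bound (g m a c : R) :
  Rabs (2 * g * (c ^ 2 - a ^ 2) + 2 * m * a * c) <= (2 * Rabs g + Rabs m) * (a ^ 2 + c ^ 2).
Proof.
  assert (Hd : Rabs (c ^ 2 - a ^ 2) <= a ^ 2 + c ^ 2) by (apply Rabs_le; nra).
  assert (Hp : Rabs (2 * a * c) <= a ^ 2 + c ^ 2)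
    by (apply Rabs_le; pose proof (pow2_ge_0 (a + c)); pose proof (pow2_ge_0 (a - c)); split; nra).
  eapply Rle_trans; [apply Rabs_triang |].
  replace (2 * g * (c ^ 2 - a ^ 2)) with (2 * (g * (c ^ 2 - a ^ 2))) by ring.
  replace (2 * m * a * c) with (m * (2 * a * c)) by ring.
  rewrite Rabs_mult, (Rabs_pos_eq 2), (Rabs_mult g), (Rabs_mult m) by lra.
  pose proof (Rmult_le_compat_l _ _ _ (Rabs_pos g) Hd).
  pose proof (Rmult_le_compat_l _ _ _ (Rabs_pos m) Hp).
  lra.
Qed.

Definition liouville_system (g : R -> R) (Lam : R) (a c : R -> R) : Prop :=
  deriv_Ioo a (fun x => - g x * a x - Lam * c x) /\
  deriv_Ioo c (fun x => g x * c x + a x) /\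
  cont_Icc a /\ cont_Icc c.

Definition dirichlet_solution (g : R -> R) (Lam : R) (a c : R -> R) : Prop :=
  liouville_system g Lam a c /\ a 0 = 1 /\ c 0 = 0 /\ c PI = 0.

Lemma liouville_system_scal (g : R -> R) (Lam k : R) (a c : R -> R) :
  liouville_system g Lam a c ->
  liouville_system g Lam (fun x => k * a x) (fun x => k * c x).
Proof.
  intros (Ha & Hc & Hca & Hcc); split; [| split; [| split]].
  - intros x Hx; eapply is_derive_eq_val; [apply is_derive_scal, Ha, Hx | ring].
  - intros x Hx; eapply is_derive_eq_val; [apply is_derive_scal, Hc, Hx | ring].
  - apply cont_Icc_scal, Hca.
  - apply cont_Icc_scal, Hcc.
Qed.

Section Liouville.

Variables (g : R -> R) (G : R).
Hypothesis g_bound : forall x, 0 <= x <= PI -> Rabs (g x) <= G.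

Lemma coef_bound_ge0 : 0 <= G.
Proof. pose proof PI_RGT_0; eapply Rle_trans; [apply Rabs_pos | apply (g_bound 0); lra]. Qed.

Lemma liouville_energy_le (Lam : R) (a c : R -> R) :
  liouville_system g Lam a c -> forall x, 0 <= x <= PI ->
  a x ^ 2 + c x ^ 2 <= (a 0 ^ 2 + c 0 ^ 2) * exp ((2 * G + Rabs (1 - Lam)) * x).
Proof.
  intros (Ha & Hc & Hca & Hcc) x Hx.
  pose proof coef_bound_ge0; pose proof (Rabs_pos (1 - Lam)).
  replace (a 0 ^ 2 + c 0 ^ 2) with (a 0 ^ 2 + c 0 ^ 2 + 0 * x) by ring.
  apply (gronwall_le (fun x => a x ^ 2 + c x ^ 2)
    (fun x => 2 * g x * (c x ^ 2 - a x ^ 2) + 2 * (1 - Lam) * a x * c x)); auto; try lra.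
  - intros t Ht; eapply is_derive_eq_val;
      [derive_struct; first [derive_by Ha | derive_by Hc] | cbv beta; ring].
  - cont_struct; auto.
  - intros t Ht; eapply Rle_trans; [apply Rle_abs |].
    eapply Rle_trans; [apply quadratic_form_bound |].
    pose proof (g_bound t ltac:(lra)); pose proof (pow2_ge_0 (a t)); pose proof (pow2_ge_0 (c t)).
    nra.
Qed.

Lemma liouville_zero (Lam : R) (a c : R -> R) :
  liouville_system g Lam a c -> a 0 = 0 -> c 0 = 0 ->
  forall x, 0 <= x <= PI -> c x = 0.
Proof.
  intros Hs Ha0 Hc0 x Hx; pose proof (liouville_energy_le Lam a c Hs x Hx) as HE.
  rewrite Ha0, Hc0 in HE; pose proof (pow2_ge_0 (a x)); pose proof (pow2_ge_0 (c x)).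
  assert (c x ^ 2 = 0) by nra; nra.
Qed.

Lemma liouville_difference_energy_le (L1 L2 R0 : R) (a1 c1 a2 c2 : R -> R) :
  liouville_system g L1 a1 c1 -> liouville_system g L2 a2 c2 ->
  (forall t, 0 <= t <= PI -> c1 t ^ 2 <= R0) -> forall x, 0 <= x <= PI ->
  (a2 x - a1 x) ^ 2 + (c2 x - c1 x) ^ 2 <=
    ((a2 0 - a1 0) ^ 2 + (c2 0 - c1 0) ^ 2 + (L2 - L1) ^ 2 * R0 * x)
    * exp ((2 * G + Rabs (1 - L2) + 1) * x).
Proof.
  intros (Ha1 & Hc1 & Hca1 & Hcc1) (Ha2 & Hc2 & Hca2 & Hcc2) HR0 x Hx.
  pose proof coef_bound_ge0; pose proof (Rabs_pos (1 - L2)); pose proof PI_RGT_0.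
  assert (0 <= R0) by (pose proof (pow2_ge_0 (c1 0)); pose proof (HR0 0 ltac:(lra)); lra).
  set (Dl := L2 - L1).
  apply (gronwall_le (fun t => (a2 t - a1 t) ^ 2 + (c2 t - c1 t) ^ 2)
    (fun t => 2 * g t * ((c2 t - c1 t) ^ 2 - (a2 t - a1 t) ^ 2)
              + 2 * (1 - L2) * (a2 t - a1 t) * (c2 t - c1 t) - 2 * Dl * (a2 t - a1 t) * c1 t));
    auto; try lra.
  - apply Rmult_le_pos; [apply pow2_ge_0 | lra].
  - intros t Ht; eapply is_derive_eq_val;
      [derive_struct; first [derive_by Ha2 | derive_by Ha1 | derive_by Hc2 | derive_by Hc1]
      | unfold Dl; ring].
  - cont_struct; auto.
  - intros t Ht.
    assert (Hquad : 2 * g t * ((c2 t - c1 t) ^ 2 - (a2 t - a1 t) ^ 2)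
        + 2 * (1 - L2) * (a2 t - a1 t) * (c2 t - c1 t)
      <= (2 * G + Rabs (1 - L2)) * ((a2 t - a1 t) ^ 2 + (c2 t - c1 t) ^ 2)).
    { eapply Rle_trans; [apply Rle_abs | eapply Rle_trans; [apply quadratic_form_bound |]].
      pose proof (pow2_ge_0 (a2 t - a1 t)); pose proof (pow2_ge_0 (c2 t - c1 t)).
      apply Rmult_le_compat_r; [lra |].
      pose proof (g_bound t ltac:(lra)); lra. }
    assert (Dl ^ 2 * c1 t ^ 2 <= Dl ^ 2 * R0)
      by (apply Rmult_le_compat_l; [apply pow2_ge_0 | apply HR0; lra]).
    pose proof (pow2_ge_0 (a2 t - a1 t + Dl * c1 t)); pose proof (pow2_ge_0 (c2 t - c1 t)).
    nra.
Qed.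

Lemma liouville_wronskian (L1 L2 : R) (a1 c1 a2 c2 : R -> R) :
  liouville_system g L1 a1 c1 -> liouville_system g L2 a2 c2 ->
  deriv_Ioo (fun x => a1 x * c2 x - c1 x * a2 x) (fun x => (L2 - L1) * (c1 x * c2 x)).
Proof.
  intros (Ha1 & Hc1 & _) (Ha2 & Hc2 & _) t Ht; eapply is_derive_eq_val;
    [derive_struct; first [derive_by Ha2 | derive_by Ha1 | derive_by Hc2 | derive_by Hc1] | ring].
Qed.

End Liouville.

(** * Separation of eigenvalues *)

Section Gap.

Variables (g : R -> R) (G B : R).
Hypothesis g_bound : forall x, 0 <= x <= PI -> Rabs (g x) <= G.
Hypothesis B_ge0 : 0 <= B.

Let r := exp ((2 * G + 1 + B) * PI).
Let K := (G + B + 1) * r.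

Lemma radius_ge1 : 1 <= r.
Proof.
  pose proof (coef_bound_ge0 g G g_bound); pose proof PI_RGT_0.
  apply exp_ge1; nra.
Qed.

Lemma slope_ge1 : 1 <= K.
Proof. pose proof (coef_bound_ge0 g G g_bound); pose proof radius_ge1; unfold K; nra. Qed.

Lemma dirichlet_solution_bound (Lam : R) (a c : R -> R) :
  Rabs Lam <= B -> dirichlet_solution g Lam a c ->
  forall x, 0 <= x <= PI -> Rabs (a x) <= r /\ Rabs (c x) <= r.
Proof.
  intros HL (Hs & Ha0 & Hc0 & _) x Hx.
  pose proof (liouville_energy_le g G g_bound Lam a c Hs x Hx) as HE; rewrite Ha0, Hc0 in HE.
  pose proof (coef_bound_ge0 g G g_bound); pose proof radius_ge1.
  assert (Hk : exp ((2 * G + Rabs (1 - Lam)) * x) <= r).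
  { assert (Rabs (1 - Lam) <= 1 + B)
      by (eapply Rle_trans; [apply Rabs_triang | rewrite Rabs_Ropp, Rabs_R1; lra]).
    pose proof (Rabs_pos (1 - Lam)); unfold r; apply exp_monotone; nra. }
  pose proof (pow2_ge_0 (a x)); pose proof (pow2_ge_0 (c x)).
  split; apply abs_le_of_sq_le; nra.
Qed.

Lemma dirichlet_solution_near0 (Lam : R) (a c : R -> R) :
  Rabs Lam <= B -> dirichlet_solution g Lam a c ->
  forall t, 0 <= t <= PI -> 1 - K * t <= a t /\ Rabs (c t) <= K * t.
Proof.
  intros HL Hsol t Ht.
  pose proof (dirichlet_solution_bound Lam a c HL Hsol) as Hb.
  destruct Hsol as ((Ha & Hc & Hca & Hcc) & Ha0 & Hc0 & _).
  pose proof radius_ge1.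
  assert (Hga : forall s, 0 < s < PI -> Rabs (g s * a s) <= G * r /\ Rabs (g s * c s) <= G * r).
  { intros s Hs; destruct (Hb s ltac:(lra)); split; apply Rabs_mult_le; auto; apply g_bound; lra. }
  split.
  - assert (Hi : Rabs (a t - a 0) <= K * (t - 0)).
    { apply (increment_abs_le a _ K 0 t Ha Hca); try lra.
      intros s Hs; destruct (Hb s ltac:(lra)) as [_ Hcs]; destruct (Hga s ltac:(lra)) as [Hgas _].
      assert (Rabs (Lam * c s) <= B * r) by (apply Rabs_mult_le; assumption).
      replace (- g s * a s - Lam * c s) with (- (g s * a s) + - (Lam * c s)) by ring.
      eapply Rle_trans; [apply Rabs_triang |]; rewrite !Rabs_Ropp; unfold K; lra. }
    rewrite Ha0 in Hi; apply Rabs_le_between in Hi; lra.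
  - assert (Hi : Rabs (c t - c 0) <= K * (t - 0)).
    { apply (increment_abs_le c _ K 0 t Hc Hcc); try lra.
      intros s Hs; destruct (Hb s ltac:(lra)) as [Has _]; destruct (Hga s ltac:(lra)) as [_ Hgcs].
      assert (0 <= B * r) by (apply Rmult_le_pos; lra).
      eapply Rle_trans; [apply Rabs_triang |]; unfold K; lra. }
    now rewrite Hc0, !Rminus_0_r in Hi.
Qed.

Lemma dirichlet_solution_lower : exists d, 0 < d <= 1 /\
  forall Lam a c, Rabs Lam <= B -> dirichlet_solution g Lam a c ->
  forall y, 0 <= y <= d -> y / 2 <= c y.
Proof.
  pose proof (coef_bound_ge0 g G g_bound); pose proof slope_ge1; pose proof PI2_3_2.
  set (d := / (2 * (G + 1) * K)).
  assert (Hd : 0 < d <= 1).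
  { split; [apply Rinv_0_lt_compat; nra |].
    apply Rle_trans with (/ 1); [apply Rinv_le_contravar; nra | rewrite Rinv_1; lra]. }
  assert (HdK : (G + 1) * K * d = / 2) by (unfold d; field; nra).
  exists d; split; [exact Hd |]; intros Lam a c HL Hsol y Hy.
  pose proof (dirichlet_solution_near0 Lam a c HL Hsol) as Hnear.
  destruct Hsol as ((_ & Hc & _ & Hcc) & _ & Hc0 & _).
  pose proof (increment_ge c _ (/ 2) 0 y Hc Hcc ltac:(lra) ltac:(lra)) as Hi.
  rewrite Hc0 in Hi; cut (/ 2 * (y - 0) <= c y - 0); [lra |]; apply Hi.
  intros t Ht; destruct (Hnear t ltac:(lra)) as [Hat Hct].
  assert (Hgc : Rabs (g t * c t) <= G * (K * t))
    by (apply Rabs_mult_le; [apply g_bound; lra | exact Hct]).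
  apply Rabs_le_between in Hgc.
  assert ((G + 1) * K * t <= (G + 1) * K * d) by (apply Rmult_le_compat_l; nra).
  nra.
Qed.

Lemma dirichlet_solution_lipschitz : exists P, 0 < P /\
  forall L1 L2 a1 c1 a2 c2, Rabs L1 <= B -> Rabs L2 <= B ->
  dirichlet_solution g L1 a1 c1 -> dirichlet_solution g L2 a2 c2 ->
  forall x, 0 <= x <= PI -> Rabs (c2 x - c1 x) <= P * Rabs (L2 - L1).
Proof.
  pose proof (coef_bound_ge0 g G g_bound); pose proof radius_ge1; pose proof PI2_3_2.
  set (k := 2 * G + 1 + B + 1).
  set (P := r ^ 2 * PI * exp (k * PI)).
  assert (Hexp : 1 <= exp (k * PI)) by (apply exp_ge1; unfold k; nra).
  assert (HP : 1 <= P).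
  { assert (1 <= r ^ 2 * PI) by nra.
    unfold P; apply Rle_trans with (1 * 1); [lra | apply Rmult_le_compat; lra]. }
  exists P; split; [lra |]; intros L1 L2 a1 c1 a2 c2 HL1 HL2 Hsol1 Hsol2 x Hx.
  pose proof (dirichlet_solution_bound L1 a1 c1 HL1 Hsol1) as Hb1.
  destruct Hsol1 as (Hs1 & Ha10 & Hc10 & _); destruct Hsol2 as (Hs2 & Ha20 & Hc20 & _).
  pose proof (liouville_difference_energy_le g G g_bound L1 L2 (r ^ 2) a1 c1 a2 c2 Hs1 Hs2) as HD.
  specialize (HD ltac:(intros t Ht; destruct (Hb1 t Ht) as [_ Hct];
    rewrite <- (pow2_abs (c1 t)); apply pow_incr; auto using Rabs_pos) x Hx).
  rewrite Ha10, Ha20, Hc10, Hc20 in HD; replace ((1 - 1) ^ 2 + (0 - 0) ^ 2) with 0 in HD by ring.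
  set (Dl := L2 - L1) in *.
  assert (Hk : exp ((2 * G + Rabs (1 - L2) + 1) * x) <= exp (k * PI)).
  { assert (Rabs (1 - L2) <= 1 + B)
      by (eapply Rle_trans; [apply Rabs_triang | rewrite Rabs_Ropp, Rabs_R1; lra]).
    pose proof (Rabs_pos (1 - L2)); apply exp_monotone; unfold k; nra. }
  assert (Hxe : Dl ^ 2 * r ^ 2 * x * exp ((2 * G + Rabs (1 - L2) + 1) * x) <= Dl ^ 2 * P).
  { unfold P; rewrite !Rmult_assoc; apply Rmult_le_compat_l; [apply pow2_ge_0 |].
    apply Rmult_le_compat_l; [apply pow2_ge_0 |].
    apply Rmult_le_compat; [lra | left; apply exp_pos | lra | exact Hk]. }
  assert (HP2 : Dl ^ 2 * P <= (P * Rabs Dl) ^ 2).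
  { rewrite Rpow_mult_distr, pow2_abs, Rmult_comm.
    apply Rmult_le_compat_r; [apply pow2_ge_0 | nra]. }
  apply abs_le_of_sq_le; [apply Rmult_le_pos; [lra | apply Rabs_pos] |].
  pose proof (pow2_ge_0 (a2 x - a1 x)); lra.
Qed.

(* The Wronskian [W = a1 c2 - c1 a2] vanishes at both ends and [W' = (L2 - L1) c1 c2], so
   [c1 c2] has "mean zero"; but for [L2] close to [L1] it is close to [c1 ^ 2], which is
   bounded below on [[d/2, d]] by [dirichlet_solution_lower]. *)
Lemma dirichlet_eigenvalue_gap : exists delta, 0 < delta /\
  forall L1 L2 a1 c1 a2 c2, Rabs L1 <= B -> Rabs L2 <= B -> L1 < L2 ->
  dirichlet_solution g L1 a1 c1 -> dirichlet_solution g L2 a2 c2 -> delta <= L2 - L1.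
Proof.
  destruct dirichlet_solution_lower as [d [Hd Hlow]].
  destruct dirichlet_solution_lipschitz as [P [HP Hlip]].
  pose proof radius_ge1; pose proof PI_RGT_0; pose proof PI2_3_2.
  assert (Hden : 0 < 32 * r * P * PI)
    by (apply Rmult_lt_0_compat; [apply Rmult_lt_0_compat; [apply Rmult_lt_0_compat |] |]; lra).
  exists (d ^ 3 / (32 * r * P * PI)); split; [apply Rdiv_lt_0_compat; [apply pow_lt |]; lra |].
  intros L1 L2 a1 c1 a2 c2 HL1 HL2 HL12 Hsol1 Hsol2.
  set (Dl := L2 - L1); assert (HDl : 0 < Dl) by (unfold Dl; lra).
  pose proof (dirichlet_solution_bound L1 a1 c1 HL1 Hsol1) as Hb1.
  pose proof (Hlip L1 L2 a1 c1 a2 c2 HL1 HL2 Hsol1 Hsol2) as Hclose.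
  rewrite (Rabs_pos_eq (L2 - L1)) in Hclose by lra; fold Dl in Hclose.
  pose proof (Hlow L1 a1 c1 HL1 Hsol1) as Hc1_low.
  destruct Hsol1 as (Hs1 & _ & Hc10 & Hc1pi); destruct Hsol2 as (Hs2 & _ & Hc20 & Hc2pi).
  set (W := fun x => a1 x * c2 x - c1 x * a2 x).
  pose proof (liouville_wronskian g L1 L2 a1 c1 a2 c2 Hs1 Hs2) as HW; fold W Dl in HW.
  assert (HWc : cont_Icc W) by (destruct Hs1 as (_ & _ & ? & ?); destruct Hs2 as (_ & _ & ? & ?);
    unfold W; cont_struct; auto).
  set (X := r * (P * Dl)).
  assert (Hprod : forall t, 0 <= t <= PI -> c1 t ^ 2 - X <= c1 t * c2 t).
  { intros t Ht; assert (Hm : Rabs (c1 t * (c2 t - c1 t)) <= X)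
      by (apply Rabs_mult_le; [apply Hb1 | apply Hclose]; exact Ht).
    apply Rabs_le_between in Hm; nra. }
  assert (Hbump : Dl * (d ^ 2 / 16) * (d - d / 2) <= Dl * X * PI).
  { apply (bump_le_of_equal_ends W _ _ _ (d / 2) d HW HWc ltac:(lra) ltac:(lra)).
    - unfold W; rewrite Hc10, Hc20, Hc1pi, Hc2pi; ring.
    - intros t Ht; pose proof (Hprod t ltac:(lra)); pose proof (pow2_ge_0 (c1 t)); nra.
    - intros t Ht; pose proof (Hprod t ltac:(lra)); pose proof (Hc1_low t ltac:(lra)).
      assert (d ^ 2 / 16 <= c1 t ^ 2) by nra.
      replace (Dl * (d ^ 2 / 16) - Dl * X) with (Dl * (d ^ 2 / 16 - X)) by ring.
      apply Rmult_le_compat_l; lra. }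
  apply Rle_div_l; [exact Hden |].
  unfold X in Hbump; nra.
Qed.

End Gap.

(** * The sine estimate *)

Definition rotation_system (g : R -> R) (lam : R) (a b : R -> R) : Prop :=
  deriv_Ioo a (fun x => - g x * a x - lam * b x) /\
  deriv_Ioo b (fun x => g x * b x + lam * a x) /\
  cont_Icc a /\ cont_Icc b.

Lemma liouville_rotation (g : R -> R) (lam : R) (a c : R -> R) :
  liouville_system g (lam ^ 2) a c -> rotation_system g lam a (fun x => lam * c x).
Proof.
  intros (Ha & Hc & Hca & Hcc); split; [| split; [| split]].
  - intros x Hx; eapply is_derive_eq_val; [apply Ha, Hx | ring].
  - intros x Hx; eapply is_derive_eq_val; [apply is_derive_scal, Hc, Hx | ring].
  - exact Hca.
  - apply cont_Icc_scal, Hcc.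
Qed.

Lemma cos_sin_comb_sq_le (x y t : R) : (x * cos t + y * sin t) ^ 2 <= x ^ 2 + y ^ 2.
Proof.
  pose proof (sin2_cos2 t) as H; unfold Rsqr in H.
  pose proof (pow2_ge_0 (x * sin t - y * cos t)).
  replace (x ^ 2 + y ^ 2) with ((x ^ 2 + y ^ 2) * (sin t * sin t + cos t * cos t))
    by (rewrite H; ring).
  nra.
Qed.

(* The phase [b cos (lam x) - a sin (lam x)], corrected at first order in [1 / lam] so that its
   derivative is [O(1 / lam)]; at the endpoints it reduces to [- a PI sin (lam PI) + O(1 / lam)]. *)
Definition rotation_phase (g : R -> R) (lam : R) (a b : R -> R) (x : R) : R :=
  b x * cos (lam * x) - a x * sin (lam * x)
  + / (2 * lam) * (g x * (a x * cos (lam * x) - b x * sin (lam * x))).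

Lemma rotation_phase_derivable (g dg : R -> R) (lam : R) (a b : R -> R) :
  deriv_Ioo g dg -> lam <> 0 -> rotation_system g lam a b ->
  deriv_Ioo (rotation_phase g lam a b) (fun x => / (2 * lam) *
    (dg x * (a x * cos (lam * x) - b x * sin (lam * x))
     - g x ^ 2 * (a x * cos (lam * x) + b x * sin (lam * x)))).
Proof.
  intros Hg Hlam (Ha & Hb & _) t Ht; eapply is_derive_eq_val;
    [unfold rotation_phase; derive_struct; first [derive_by Ha | derive_by Hb | derive_by Hg]
    | cbv beta; field; exact Hlam].
Qed.

Lemma rotation_phase_cont (g : R -> R) (lam : R) (a b : R -> R) :
  cont_Icc g -> rotation_system g lam a b -> cont_Icc (rotation_phase g lam a b).
Proof. intros Hg (_ & _ & Ha & Hb); unfold rotation_phase; cont_struct; assumption. Qed.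

Section Rotation.

Variables (g dg : R -> R) (G G1 : R).
Hypothesis g_deriv : deriv_Ioo g dg.
Hypothesis g_cont : cont_Icc g.
Hypothesis g_bound : forall x, 0 <= x <= PI -> Rabs (g x) <= G.
Hypothesis dg_bound : forall x, 0 <= x <= PI -> Rabs (dg x) <= G1.

Lemma rotation_energy_bounds (lam : R) (a b : R -> R) :
  rotation_system g lam a b -> forall x, 0 <= x <= PI ->
  a x ^ 2 + b x ^ 2 <= (a 0 ^ 2 + b 0 ^ 2) * exp (2 * G * x) /\
  a 0 ^ 2 + b 0 ^ 2 <= (a x ^ 2 + b x ^ 2) * exp (2 * G * x).
Proof.
  intros (Ha & Hb & Hca & Hcb) x Hx.
  pose proof (coef_bound_ge0 g G g_bound).
  set (E := fun t => a t ^ 2 + b t ^ 2).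
  set (dE := fun t => 2 * g t * (b t ^ 2 - a t ^ 2)).
  assert (HdE : deriv_Ioo E dE).
  { intros t Ht; eapply is_derive_eq_val;
      [unfold E; derive_struct; first [derive_by Ha | derive_by Hb] | unfold dE; ring]. }
  assert (HcE : cont_Icc E) by (unfold E; cont_struct; auto).
  assert (Hbound : forall t, 0 < t < PI -> Rabs (dE t) <= 2 * (G * E t)).
  { intros t Ht; unfold dE, E; cbv beta; rewrite Rmult_assoc.
    apply Rabs_mult_le; [rewrite Rabs_pos_eq; lra |].
    apply Rabs_mult_le; [apply g_bound; lra |].
    pose proof (pow2_ge_0 (a t)); pose proof (pow2_ge_0 (b t)); apply Rabs_le; lra. }
  split.
  - replace (a 0 ^ 2 + b 0 ^ 2) with (E 0 + 0 * x) by (unfold E; ring).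
    apply (gronwall_le E dE); auto; try lra.
    intros t Ht; specialize (Hbound t Ht); apply Rabs_le_between in Hbound; lra.
  - apply (gronwall_ge E dE); auto.
    intros t Ht; specialize (Hbound t Ht); apply Rabs_le_between in Hbound; lra.
Qed.

Lemma rotation_comb_bound (lam : R) (a b : R -> R) :
  rotation_system g lam a b -> b 0 = 0 -> forall x, 0 <= x <= PI ->
  Rabs (a x * cos (lam * x) - b x * sin (lam * x)) <= Rabs (a 0) * exp (G * PI) /\
  Rabs (a x * cos (lam * x) + b x * sin (lam * x)) <= Rabs (a 0) * exp (G * PI).
Proof.
  intros Hrot Hb0 x Hx; pose proof (coef_bound_ge0 g G g_bound).
  destruct (rotation_energy_bounds lam a b Hrot x Hx) as [Hup _]; rewrite Hb0 in Hup.
  assert (Hexp : exp (2 * G * x) <= exp (G * PI) ^ 2) by (rewrite exp_sq; apply exp_monotone; nra).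
  assert (Henergy : a x ^ 2 + b x ^ 2 <= (Rabs (a 0) * exp (G * PI)) ^ 2).
  { rewrite Rpow_mult_distr, pow2_abs; pose proof (pow2_ge_0 (a 0)).
    replace (0 ^ 2) with 0 in Hup by ring; nra. }
  pose proof (Rabs_pos (a 0)); pose proof (exp_pos (G * PI)).
  pose proof (cos_sin_comb_sq_le (a x) (- b x) (lam * x)).
  pose proof (cos_sin_comb_sq_le (a x) (b x) (lam * x)).
  split; apply abs_le_of_sq_le; nra.
Qed.

Lemma rotation_endpoint_bound (lam : R) (a b : R -> R) :
  rotation_system g lam a b -> b 0 = 0 -> b PI = 0 ->
  Rabs (a 0) <= Rabs (a PI) * exp (G * PI).
Proof.
  intros Hrot Hb0 Hbpi; pose proof PI_RGT_0.
  destruct (rotation_energy_bounds lam a b Hrot PI ltac:(lra)) as [_ Hdown].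
  rewrite Hb0, Hbpi in Hdown; replace (0 ^ 2) with 0 in Hdown by ring.
  replace (exp (2 * G * PI)) with (exp (G * PI) ^ 2) in Hdown by (rewrite exp_sq; f_equal; ring).
  apply abs_le_of_sq_le; [apply Rmult_le_pos; [apply Rabs_pos | left; apply exp_pos] |].
  rewrite Rpow_mult_distr, !pow2_abs; lra.
Qed.

Lemma rotation_phase_increment (lam : R) (a b : R -> R) :
  0 < lam -> rotation_system g lam a b -> b 0 = 0 ->
  Rabs (lam * (rotation_phase g lam a b PI - rotation_phase g lam a b 0))
    <= PI * (G1 + G ^ 2) * (Rabs (a 0) * exp (G * PI)) / 2.
Proof.
  intros Hlam Hrot Hb0; pose proof PI_RGT_0.
  pose proof (rotation_comb_bound lam a b Hrot Hb0) as Hcomb.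
  pose proof (increment_abs_le (rotation_phase g lam a b) _
    (/ (2 * lam) * ((G1 + G ^ 2) * (Rabs (a 0) * exp (G * PI)))) 0 PI
    (rotation_phase_derivable g dg lam a b g_deriv ltac:(lra) Hrot)
    (rotation_phase_cont g lam a b g_cont Hrot) ltac:(lra) ltac:(lra)) as Hinc.
  rewrite Rabs_mult, (Rabs_pos_eq lam) by lra.
  replace (PI * (G1 + G ^ 2) * (Rabs (a 0) * exp (G * PI)) / 2)
    with (lam * (/ (2 * lam) * ((G1 + G ^ 2) * (Rabs (a 0) * exp (G * PI))) * (PI - 0)))
    by (field; lra).
  apply Rmult_le_compat_l; [lra | apply Hinc].
  intros t Ht; destruct (Hcomb t ltac:(lra)) as [HP HA].
  apply Rabs_mult_le; [rewrite Rabs_pos_eq; [lra | left; apply Rinv_0_lt_compat; lra] |].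
  eapply Rle_trans; [apply Rabs_triang |]; rewrite Rabs_Ropp, Rmult_plus_distr_r.
  apply Rplus_le_compat; apply Rabs_mult_le; auto; [apply dg_bound; lra |].
  rewrite <- RPow_abs; apply pow_incr; split; [apply Rabs_pos | apply g_bound; lra].
Qed.

Lemma rotation_sin_bound (lam : R) (a b : R -> R) :
  0 < lam -> rotation_system g lam a b -> b 0 = 0 -> b PI = 0 -> a 0 <> 0 ->
  Rabs (sin (lam * PI)) * lam <=
    (G + G * exp (G * PI) + PI * (G1 + G ^ 2) * exp (G * PI) ^ 2) / 2.
Proof.
  intros Hlam Hrot Hb0 Hbpi Ha0; pose proof PI_RGT_0.
  pose proof (coef_bound_ge0 g G g_bound).
  assert (HG1 : 0 <= G1) by (eapply Rle_trans; [apply Rabs_pos | apply (dg_bound 0); lra]).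
  pose proof (rotation_endpoint_bound lam a b Hrot Hb0 Hbpi) as Ha0pi.
  pose proof (rotation_phase_increment lam a b Hlam Hrot Hb0) as T3.
  set (h := exp (G * PI)) in *.
  assert (Hh : 1 <= h) by (apply exp_ge1; nra).
  assert (HaPI : 0 < Rabs (a PI)).
  { pose proof (Rabs_pos_lt _ Ha0); pose proof (Rabs_pos (a PI)); nra. }
  assert (Hid : a PI * sin (lam * PI) * lam = g PI * a PI * cos (lam * PI) / 2 - g 0 * a 0 / 2
      - lam * (rotation_phase g lam a b PI - rotation_phase g lam a b 0)).
  { unfold rotation_phase; rewrite Hb0, Hbpi, Rmult_0_r, cos_0, sin_0; field; lra. }
  assert (T1 : Rabs (g PI * a PI * cos (lam * PI) / 2) <= G * Rabs (a PI) * 1 / 2).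
  { unfold Rdiv; apply Rabs_mult_le; [| rewrite Rabs_pos_eq; lra].
    apply Rabs_mult_le; [apply Rabs_mult_le; [apply g_bound; lra | lra] |].
    apply Rabs_le, COS_bound. }
  assert (T2 : Rabs (g 0 * a 0 / 2) <= G * (Rabs (a PI) * h) / 2).
  { unfold Rdiv; apply Rabs_mult_le; [| rewrite Rabs_pos_eq; lra].
    apply Rabs_mult_le; [apply g_bound; lra | exact Ha0pi]. }
  assert (T3' : PI * (G1 + G ^ 2) * (Rabs (a 0) * h) / 2
              <= PI * (G1 + G ^ 2) * (Rabs (a PI) * h ^ 2) / 2).
  { assert (Rabs (a 0) * h <= Rabs (a PI) * h ^ 2) by nra.
    assert (0 <= PI * (G1 + G ^ 2)) by (pose proof (pow2_ge_0 G); nra).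
    nra. }
  apply Rmult_le_reg_l with (Rabs (a PI)); [exact HaPI |].
  replace (Rabs (a PI) * (Rabs (sin (lam * PI)) * lam)) with (Rabs (a PI * sin (lam * PI) * lam))
    by (rewrite !Rabs_mult, (Rabs_pos_eq lam); [ring | lra]).
  rewrite Hid; unfold Rminus in T3 |- *.
  eapply Rle_trans; [apply Rabs_triang |]; rewrite Rabs_Ropp.
  eapply Rle_trans; [apply Rplus_le_compat_r, Rabs_triang |]; rewrite Rabs_Ropp.
  lra.
Qed.

End Rotation.

(** * From the Sturm-Liouville problem *)

Definition liouville_coef (u du : R -> R) (x : R) : R := du x / (2 * u x).

Definition liouville_coef_deriv (u du ddu : R -> R) (x : R) : R :=
  (ddu x * u x - du x ^ 2) / (2 * u x ^ 2).

Section Transform.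

Variables (u du ddu : R -> R).
Hypothesis u_deriv : deriv_Ioo u du.
Hypothesis du_deriv : deriv_Ioo du ddu.
Hypothesis u_cont : cont_Icc u.
Hypothesis du_cont : cont_Icc du.
Hypothesis ddu_cont : cont_Icc ddu.
Hypothesis u_pos : forall x, 0 <= x <= PI -> 0 < u x.

Lemma liouville_coef_cont : cont_Icc (liouville_coef u du).
Proof.
  unfold liouville_coef, Rdiv; cont_struct; auto.
  apply cont_Icc_inv; [cont_struct; auto |].
  intros x Hx; specialize (u_pos x Hx); lra.
Qed.

Lemma liouville_coef_deriv_cont : cont_Icc (liouville_coef_deriv u du ddu).
Proof.
  unfold liouville_coef_deriv, Rdiv; cont_struct; auto.
  apply cont_Icc_inv; [cont_struct; auto |].
  intros x Hx; specialize (u_pos x Hx); nra.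
Qed.

Lemma liouville_coef_derivable : deriv_Ioo (liouville_coef u du) (liouville_coef_deriv u du ddu).
Proof.
  intros x Hx; pose proof (u_pos x ltac:(lra)).
  unfold liouville_coef, liouville_coef_deriv; eapply is_derive_eq_val.
  - apply (derive_mult du (fun t => / (2 * u t))); [apply du_deriv, Hx |].
    apply (is_derive_inv (fun t => 2 * u t)); [| lra].
    apply (is_derive_scal u); apply u_deriv, Hx.
  - field; lra.
Qed.

Lemma sqrt_derivable :
  deriv_Ioo (fun x => sqrt (u x)) (fun x => liouville_coef u du x * sqrt (u x)).
Proof.
  intros x Hx; pose proof (u_pos x ltac:(lra)) as Hux.
  eapply is_derive_eq_val; [apply is_derive_sqrt; [apply u_deriv, Hx | lra] |].
  unfold liouville_coef; pose proof (sqrt_lt_R0 _ Hux).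
  rewrite <- (sqrt_sqrt (u x)) at 2 by lra; field; lra.
Qed.

(* The flux equation is stated for [u phi'] as a whole; comparing it with the product rule
   yields [phi'' = - Lam phi - 2 g phi']. *)
Lemma eigenfunction_liouville (Lam : R) : DSL_eigenvalue u Lam ->
  exists a c, liouville_system (liouville_coef u du) Lam a c /\ c 0 = 0 /\ c PI = 0 /\
    exists x, 0 <= x <= PI /\ c x <> 0.
Proof.
  intros [phi [dphi [ddphi (Hd & Hc & Hflux & H0 & Hpi & [x0 [Hx0 Hnz]])]]].
  assert (Hphi : deriv_Ioo phi dphi) by (intros x Hx; apply (proj1 (Hd x Hx))).
  assert (Hdphi : deriv_Ioo dphi ddphi) by (intros x Hx; apply (proj2 (Hd x Hx))).
  assert (Hphic : cont_Icc phi) by (intros x Hx; apply (proj1 (Hc x Hx))).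
  assert (Hdphic : cont_Icc dphi) by (intros x Hx; apply (proj1 (proj2 (Hc x Hx)))).
  exists (fun x => sqrt (u x) * dphi x), (fun x => sqrt (u x) * phi x).
  assert (Hs : cont_Icc (fun x => sqrt (u x))).
  { apply (cont_Icc_comp sqrt u u_cont); intros; apply continuous_sqrt. }
  split; [split; [| split; [| split]] | split; [| split]].
  - intros x Hx; pose proof (u_pos x ltac:(lra)).
    assert (Hdd : du x * dphi x + u x * ddphi x = - Lam * u x * phi x).
    { rewrite <- (is_derive_unique _ _ _ (Hflux x Hx)); symmetry.
      apply is_derive_unique, derive_mult; [apply u_deriv, Hx | apply Hdphi, Hx]. }
    eapply is_derive_eq_val; [apply derive_mult; [apply sqrt_derivable, Hx | apply Hdphi, Hx] |].
    replace (ddphi x) with ((- Lam * u x * phi x - du x * dphi x) / u x)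
      by (rewrite <- Hdd; field; lra).
    unfold liouville_coef; cbv beta; field; lra.
  - intros x Hx; eapply is_derive_eq_val;
      [apply derive_mult; [apply sqrt_derivable, Hx | apply Hphi, Hx] | cbv beta; ring].
  - apply cont_Icc_mult; [exact Hs | exact Hdphic].
  - apply cont_Icc_mult; [exact Hs | exact Hphic].
  - cbv beta; rewrite H0; ring.
  - cbv beta; rewrite Hpi; ring.
  - exists x0; split; [exact Hx0 |].
    pose proof (sqrt_lt_R0 _ (u_pos x0 Hx0)); cbv beta; intros Hz.
    apply Rmult_integral in Hz; destruct Hz; lra.
Qed.

End Transform.

Lemma dirichlet_normalize (g : R -> R) (G Lam : R) (a c : R -> R) :
  (forall x, 0 <= x <= PI -> Rabs (g x) <= G) ->
  liouville_system g Lam a c -> c 0 = 0 -> c PI = 0 ->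
  (exists x, 0 <= x <= PI /\ c x <> 0) ->
  dirichlet_solution g Lam (fun x => / a 0 * a x) (fun x => / a 0 * c x).
Proof.
  intros Hg Hs Hc0 Hcpi [x [Hx Hnz]].
  assert (Ha0 : a 0 <> 0)
    by (intros Ha0; apply Hnz; exact (liouville_zero g G Hg Lam a c Hs Ha0 Hc0 x Hx)).
  split; [apply liouville_system_scal, Hs |].
  cbv beta; rewrite Hc0, Hcpi; repeat split; [field; exact Ha0 | ring | ring].
Qed.

Lemma liouville_transform (u : R -> R) :
  C2_closed u -> (forall x, 0 <= x <= PI -> 0 < u x) ->
  exists g dg, deriv_Ioo g dg /\ cont_Icc g /\ cont_Icc dg /\
    forall Lam, DSL_eigenvalue u Lam -> exists a c, dirichlet_solution g Lam a c.
Proof.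
  intros [du [ddu [Hd Hc]]] Hpos.
  assert (Hu : deriv_Ioo u du) by (intros x Hx; apply (proj1 (Hd x Hx))).
  assert (Hdu : deriv_Ioo du ddu) by (intros x Hx; apply (proj2 (Hd x Hx))).
  assert (Huc : cont_Icc u) by (intros x Hx; apply (proj1 (Hc x Hx))).
  assert (Hduc : cont_Icc du) by (intros x Hx; apply (proj1 (proj2 (Hc x Hx)))).
  assert (Hdduc : cont_Icc ddu) by (intros x Hx; apply (proj2 (proj2 (Hc x Hx)))).
  exists (liouville_coef u du), (liouville_coef_deriv u du ddu).
  split; [apply liouville_coef_derivable; auto |].
  split; [apply liouville_coef_cont; auto |].
  split; [apply liouville_coef_deriv_cont; auto |].
  intros Lam HLam.
  destruct (cont_Icc_bounded _ (liouville_coef_cont u du Huc Hduc Hpos)) as [G HG].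
  destruct (eigenfunction_liouville u du Hu Huc Hpos Lam HLam) as [a [c (Hs & Hc0 & Hcpi & Hnz)]].
  eexists; eexists; eapply dirichlet_normalize; eauto.
Qed.

Lemma dirichlet_sin_bound (g dg : R -> R) :
  deriv_Ioo g dg -> cont_Icc g -> cont_Icc dg ->
  exists K, forall Lam a c, 0 < Lam -> dirichlet_solution g Lam a c ->
    Rabs (sin (sqrt Lam * PI)) * sqrt Lam <= K.
Proof.
  intros Hd Hc Hdc.
  destruct (cont_Icc_bounded g Hc) as [G HG]; destruct (cont_Icc_bounded dg Hdc) as [G1 HG1].
  eexists; intros Lam a c HLam (Hs & Ha0 & Hc0 & Hcpi).
  assert (Hlam : 0 < sqrt Lam) by (apply sqrt_lt_R0, HLam).
  rewrite <- (pow2_sqrt Lam) in Hs by lra.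
  apply (rotation_sin_bound g dg G G1 Hd Hc HG HG1 (sqrt Lam) a (fun x => sqrt Lam * c x));
    auto using liouville_rotation.
  - cbv beta; rewrite Hc0; ring.
  - cbv beta; rewrite Hcpi; ring.
  - rewrite Ha0; lra.
Qed.

Section Spectrum.

Variables (g : R -> R) (G : R) (lam2 : nat -> R).
Hypothesis g_bound : forall x, 0 <= x <= PI -> Rabs (g x) <= G.
Hypothesis lam2_increasing : forall n, (1 <= n)%nat -> lam2 n < lam2 (S n).
Hypothesis lam2_solution : forall n, (1 <= n)%nat -> exists a c, dirichlet_solution g (lam2 n) a c.

Lemma lam2_ge_first (n : nat) : (1 <= n)%nat -> lam2 1 <= lam2 n.
Proof.
  induction n as [| n IH]; intros Hn; [lia |].
  destruct (Nat.eq_dec n 0) as [-> | Hn0]; [lra |].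
  pose proof (lam2_increasing n ltac:(lia)); pose proof (IH ltac:(lia)); lra.
Qed.

Lemma eigenvalues_below_finite (B : R) :
  exists N, forall n, (1 <= n)%nat -> lam2 n <= B -> (n < N)%nat.
Proof.
  set (Bd := Rabs (lam2 1) + Rabs B).
  assert (HBd : 0 <= Bd)
    by (unfold Bd; pose proof (Rabs_pos (lam2 1)); pose proof (Rabs_pos B); lra).
  destruct (dirichlet_eigenvalue_gap g G Bd g_bound HBd) as [delta [Hdelta Hgap]].
  assert (Hwindow : forall n, (1 <= n)%nat -> lam2 n <= B -> Rabs (lam2 n) <= Bd).
  { intros n Hn HnB; pose proof (lam2_ge_first n Hn).
    pose proof (Rle_abs B); pose proof (Rle_abs (- lam2 1)); rewrite Rabs_Ropp in *.
    pose proof (Rabs_pos (lam2 1)); pose proof (Rabs_pos B); apply Rabs_le; unfold Bd; lra. }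
  assert (Hlin : forall n, (1 <= n)%nat -> lam2 n <= B -> lam2 1 + INR (n - 1) * delta <= lam2 n).
  { induction n as [| n IH]; intros Hn HnB; [lia |].
    destruct (Nat.eq_dec n 0) as [-> | Hn0]; [simpl; lra |].
    pose proof (lam2_increasing n ltac:(lia)).
    pose proof (IH ltac:(lia) ltac:(lra)).
    destruct (lam2_solution n ltac:(lia)) as [a1 [c1 Hs1]].
    destruct (lam2_solution (S n) ltac:(lia)) as [a2 [c2 Hs2]].
    pose proof (Hgap _ _ _ _ _ _ (Hwindow n ltac:(lia) ltac:(lra)) (Hwindow (S n) Hn HnB)
      ltac:(lra) Hs1 Hs2).
    replace (S n - 1)%nat with (S (n - 1)) by lia; rewrite S_INR; lra. }
  destruct (INR_unbounded ((B - lam2 1) / delta + 1)) as [N HN].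
  exists N; intros n Hn HnB; apply INR_lt.
  pose proof (Hlin n Hn HnB).
  assert (INR (n - 1) <= (B - lam2 1) / delta) by (apply Rle_div_r; lra).
  replace n with (S (n - 1)) by lia; rewrite S_INR; lra.
Qed.

End Spectrum.

(** * Arithmetic of the levels *)

Lemma odd_ratio_dist_Z (p q m : nat) :
  (0 < p)%nat -> Nat.gcd p q = 1%nat -> Nat.Even p -> Nat.Odd m ->
  forall z : Z, 1 / INR p <= Rabs (INR q / INR p * INR m - IZR z).
Proof.
  intros Hp Hg [a Ha] [c Hc] z.
  assert (Hq : Nat.Odd q).
  { destruct (Nat.Even_or_Odd q) as [[b Hb] | Hq]; [exfalso | exact Hq].
    assert (Hdiv : Nat.divide 2 (Nat.gcd p q))
      by (apply Nat.gcd_greatest; [exists a | exists b]; lia).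
    rewrite Hg in Hdiv; destruct Hdiv as [k Hk]; lia. }
  destruct Hq as [b Hb].
  assert (HpR : 0 < INR p) by (apply lt_0_INR, Hp).
  replace (INR q / INR p * INR m - IZR z)
    with (IZR (Z.of_nat q * Z.of_nat m - z * Z.of_nat p) / INR p)
    by (rewrite minus_IZR, !mult_IZR, <- !INR_IZR_INZ; field; lra).
  unfold Rdiv; rewrite Rabs_mult, (Rabs_pos_eq (/ INR p)) by (left; apply Rinv_0_lt_compat, HpR).
  apply Rmult_le_compat_r; [left; apply Rinv_0_lt_compat, HpR |].
  rewrite Rabs_Zabs; apply IZR_le; subst; lia.
Qed.

Lemma Rabs_sin_shift (x : R) (z : Z) : Rabs (sin (x + IZR z * PI)) = Rabs (sin x).
Proof.
  assert (Hs : sin (IZR z * PI) = 0) by (apply sin_eq_0_1; exists z; reflexivity).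
  pose proof (sin2_cos2 (IZR z * PI)) as Hc; rewrite Hs in Hc; unfold Rsqr in Hc.
  rewrite sin_plus, Hs, Rmult_0_r, Rplus_0_r, Rabs_mult.
  assert (Hc1 : Rabs (cos (IZR z * PI)) = 1) by (unfold Rabs; destruct Rcase_abs; nra).
  now rewrite Hc1, Rmult_1_r.
Qed.

Lemma Rabs_sin_off_Z (x delta : R) :
  0 < delta <= 1 / 2 -> (forall z : Z, delta <= Rabs (x - IZR z)) ->
  sin (PI * delta) <= Rabs (sin (x * PI)).
Proof.
  intros Hd Hfar; pose proof PI_RGT_0.
  destruct (base_Int_part x) as [Hi1 Hi2]; set (z := Int_part x) in *; set (t := x - IZR z).
  assert (Ht1 : delta <= t) by (specialize (Hfar z); rewrite Rabs_pos_eq in Hfar; unfold t; lra).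
  assert (Ht2 : delta <= 1 - t).
  { specialize (Hfar (z + 1)%Z); rewrite plus_IZR, Rabs_left1 in Hfar; unfold t; lra. }
  replace (x * PI) with (PI * t + IZR z * PI) by (unfold t; ring).
  rewrite Rabs_sin_shift.
  destruct (Rle_dec t (1 / 2)).
  - rewrite Rabs_pos_eq by (apply sin_ge_0; nra); apply sin_incr_1; nra.
  - rewrite <- (sin_PI_x (PI * t)), Rabs_pos_eq by (apply sin_ge_0; nra); apply sin_incr_1; nra.
Qed.

(* If [lam] is within [delta] of [s], it is [delta] away from the integers and the sine bound
   applies; otherwise [lam ^ 2 - s ^ 2] is at least [delta * lam]. *)
Lemma root_bound_off_Z (lam s delta K C : R) :
  0 < delta <= 1 / 2 -> 0 <= lam -> 0 <= s ->
  (forall z : Z, 2 * delta <= Rabs (s - IZR z)) ->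
  Rabs (sin (lam * PI)) * lam <= K -> Rabs (lam ^ 2 - s ^ 2) <= C ->
  lam <= K / sin (PI * delta) + C / delta.
Proof.
  intros Hd Hlam Hs Hfar HK HC; pose proof PI_RGT_0.
  assert (Hsin : 0 < sin (PI * delta)) by (apply sin_gt_0; nra).
  assert (HK0 : 0 <= K) by (pose proof (Rabs_pos (sin (lam * PI))); nra).
  assert (HC0 : 0 <= C) by (pose proof (Rabs_pos (lam ^ 2 - s ^ 2)); lra).
  assert (0 <= K / sin (PI * delta)) by (apply Rdiv_le_0_compat; lra).
  assert (0 <= C / delta) by (apply Rdiv_le_0_compat; lra).
  destruct (Rlt_le_dec (Rabs (lam - s)) delta) as [Hnear | Hfar_s].
  - assert (Hoff : forall z : Z, delta <= Rabs (lam - IZR z)).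
    { intros z; specialize (Hfar z).
      pose proof (Rabs_triang (s - lam) (lam - IZR z)) as Htri.
      replace (s - lam + (lam - IZR z)) with (s - IZR z) in Htri by ring.
      rewrite (Rabs_minus_sym s lam) in Htri; lra. }
    pose proof (Rabs_sin_off_Z lam delta Hd Hoff).
    assert (lam <= K / sin (PI * delta)) by (apply Rle_div_r; nra).
    lra.
  - assert (Hprod : Rabs (lam ^ 2 - s ^ 2) = Rabs (lam - s) * (lam + s))
      by (rewrite <- (Rabs_pos_eq (lam + s)) by lra; rewrite <- Rabs_mult; f_equal; ring).
    assert (lam <= C / delta) by (apply Rle_div_r; [lra | nra]).
    lra.
Qed.

Lemma finite_isolation (l : list R) (c : R) :
  exists eps, 0 < eps /\ forall x, In x l -> x <> c -> eps <= Rabs (x - c).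
Proof.
  induction l as [| y l [eps [Heps Hl]]].
  - exists 1; split; [lra | intros x []].
  - destruct (Req_dec y c) as [-> | Hyc].
    + exists eps; split; [exact Heps |]; intros x [<- | Hx] Hxc; [contradiction | auto].
    + exists (Rmin eps (Rabs (y - c))).
      split; [apply Rmin_pos; [exact Heps | apply Rabs_pos_lt; lra] |].
      intros x [<- | Hx] Hxc; [apply Rmin_r |].
      eapply Rle_trans; [apply Rmin_l | auto].
Qed.

Lemma isolated_of_box (f : nat -> nat -> R) (P Q : nat -> Prop) (c : R) (M N : nat) :
  (forall m n, P m -> Q n -> Rabs (f m n - c) < 1 -> (m < M)%nat /\ (n < N)%nat) ->
  (exists eps, 0 < eps /\ forall m n, P m -> Q n -> Rabs (f m n - c) < eps -> f m n = c) /\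
  (exists K : nat, forall m n, P m -> Q n -> f m n = c -> (m < K)%nat /\ (n < K)%nat).
Proof.
  intros Hbox; split.
  - set (values := map (fun ij => f (fst ij) (snd ij)) (list_prod (seq 0 M) (seq 0 N))).
    destruct (finite_isolation values c) as [eps [Heps Hiso]].
    exists (Rmin eps 1); split; [apply Rmin_pos; lra |].
    intros m n Hm Hn Hnear; pose proof (Rmin_l eps 1); pose proof (Rmin_r eps 1).
    destruct (Hbox m n Hm Hn ltac:(lra)) as [HmM HnN].
    destruct (Req_dec (f m n) c) as [Heq | Hne]; [exact Heq | exfalso].
    assert (Hin : In (f m n) values)
      by (apply in_map_iff; exists (m, n); split; [reflexivity | apply in_prod; apply in_seq; lia]).
    pose proof (Hiso _ Hin Hne); lra.
  - exists (M + N)%nat; intros m n Hm Hn Heq.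
    assert (Hnear : Rabs (f m n - c) < 1) by (rewrite Heq, Rminus_diag, Rabs_R0; lra).
    destruct (Hbox m n Hm Hn Hnear); lia.
Qed.

Lemma mu_near_level_bounded (lam2 : nat -> R) (p q : nat) (K c : R) :
  (0 < p)%nat -> (0 < q)%nat -> Nat.gcd p q = 1%nat -> Nat.Even p ->
  (forall n, (1 <= n)%nat -> 0 < lam2 n ->
     Rabs (sin (sqrt (lam2 n) * PI)) * sqrt (lam2 n) <= K) ->
  (forall B, exists N, forall n, (1 <= n)%nat -> lam2 n <= B -> (n < N)%nat) ->
  exists M N, forall m n, Nat.Odd m -> (1 <= n)%nat -> Rabs (mu lam2 p q m n - c) < 1 ->
    (m < M)%nat /\ (n < N)%nat.
Proof.
  intros Hp Hq Hg Hev HK Hcount.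
  set (pR := INR p).
  assert (Hp2 : 2 <= pR) by (destruct Hev as [a Ha]; apply (le_INR 2); lia).
  set (delta := 1 / (2 * pR)).
  assert (Hd : 0 < delta <= 1 / 2)
    by (unfold delta; split; [apply Rdiv_lt_0_compat | apply Rle_div_l]; lra).
  set (C := Rabs c + 1).
  set (Lmax := K / sin (PI * delta) + C / delta).
  destruct (Hcount (Lmax ^ 2)) as [N HN].
  destruct (INR_unbounded (pR ^ 2 * (Lmax ^ 2 + C))) as [M HM].
  exists M, N; intros m n Hm Hn Hnear.
  set (s := INR q / pR * INR m).
  assert (Hq1 : 1 <= INR q) by (apply (le_INR 1), Hq).
  assert (Hm1 : 1 <= INR m) by (destruct Hm as [k ->]; apply (le_INR 1); lia).
  assert (Hps : pR * s = INR q * INR m) by (unfold s; field; lra).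
  assert (Hs : 0 <= s) by nra.
  assert (Hdiff : Rabs (lam2 n - s ^ 2) <= C).
  { replace (lam2 n - s ^ 2) with ((mu lam2 p q m n - c) + c) by (unfold mu, s, pR; ring).
    eapply Rle_trans; [apply Rabs_triang | unfold C; lra]. }
  assert (Hlam : lam2 n <= Lmax ^ 2).
  { destruct (Rle_lt_dec (lam2 n) 0) as [Hneg | Hpos]; [pose proof (pow2_ge_0 Lmax); lra |].
    rewrite <- (pow2_sqrt (lam2 n)) in Hdiff |- * by lra.
    apply pow_incr; split; [apply sqrt_pos |].
    apply (root_bound_off_Z (sqrt (lam2 n)) s delta K C Hd (sqrt_pos _) Hs); auto.
    intros z; replace (2 * delta) with (1 / pR) by (unfold delta; field; lra).
    apply odd_ratio_dist_Z; auto. }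
  split; [| apply HN; auto].
  apply INR_lt; apply Rle_lt_trans with (pR ^ 2 * (Lmax ^ 2 + C)); [| lra].
  assert (s ^ 2 <= Lmax ^ 2 + C) by (apply Rabs_le_between in Hdiff; lra).
  assert (INR m <= pR * s) by nra.
  nra.
Qed.

Theorem proposition2p1 (u : R -> R) (lam2 : nat -> R) (p q : nat) :
  C2_closed u ->
  (forall x, 0 <= x <= PI -> 0 < u x) ->
  (0 < p)%nat -> (0 < q)%nat -> Nat.gcd p q = 1%nat ->
  DSL_eigen_enum u lam2 ->
  Nat.Even p ->
  forall m n, Nat.Odd m -> (1 <= n)%nat ->
    (exists eps, 0 < eps /\
       forall m' n', Nat.Odd m' -> (1 <= n')%nat ->
         Rabs (mu lam2 p q m' n' - mu lam2 p q m n) < eps ->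
         mu lam2 p q m' n' = mu lam2 p q m n) /\
    (exists N : nat,
       forall m' n', Nat.Odd m' -> (1 <= n')%nat ->
         mu lam2 p q m' n' = mu lam2 p q m n -> (m' < N)%nat /\ (n' < N)%nat).
Proof.
  intros HC2 Hpos Hp Hq Hg [Hincr [Heig _]] Hev m n Hm Hn.
  destruct (liouville_transform u HC2 Hpos) as [g [dg (Hd & Hgc & Hdgc & Hsol)]].
  destruct (cont_Icc_bounded g Hgc) as [G HG].
  assert (Hsoln : forall k, (1 <= k)%nat -> exists a c, dirichlet_solution g (lam2 k) a c)
    by (intros k Hk; apply Hsol, Heig, Hk).
  destruct (dirichlet_sin_bound g dg Hd Hgc Hdgc) as [K HK].
  destruct (mu_near_level_bounded lam2 p q K (mu lam2 p q m n) Hp Hq Hg Hev) as [M [N Hbox]].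
  - intros k Hk Hk0; destruct (Hsoln k Hk) as [a [c Hs]]; exact (HK _ _ _ Hk0 Hs).
  - exact (eigenvalues_below_finite g G lam2 HG Hincr Hsoln).
  - exact (isolated_of_box (mu lam2 p q) Nat.Odd (fun k => (1 <= k)%nat) _ M N Hbox).
Qed.
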